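(* Let $K$ be the $2$-uniform tiling of the plane whose vertex types are $[3^2,6^2]$ and $[3^1,6^1,3^1,6^1]$. If $X$ is a map on the torus that is a quotient $X=K/\Gamma$ of $K$, then the vertices of $X$ form exactly $2$ orbits under ${\rm Aut}(X)$.
   Context: A map is a polyhedral map: a cellular embedding of a connected graph in a closed surface such that the intersection of any two distinct faces is empty, a single vertex, or a single edge. For a vertex $u$, the faces containing $u$ form a cyclic sequence (the face-cycle at $u$); if this cyclic sequence consists of consecutive blocks of $n_1$ $p_1$-gons, then $n_2$ $p_2$-gons, ..., then $n_k$ $p_k$-gons, with cyclically consecutive $p_i$ distinct, then $u$ is said to have type $[p_1^{n_1},\dots,p_k^{n_k}]$ (defined up to cyclic shift and reversal). A $2$-uniform tiling is an edge-to-edge tiling of the Euclidean plane $\mathbb{R}^2$ by regular polygons whose symmetry group has exactly two orbits on the set of vertices; viewed as a map on the plane, its vertices have (at most) two types, listed as $[W;Z]$. (Up to isomorphism there are exactly $20$ such tilings; there is exactly one with the vertex types named in the claim.) For a map $K$ on the plane, a quotient of $K$ on the torus is a map $X$ on the torus together with a polyhedral covering map $\eta:K\to X$ with $X=K/\Gamma$, where $\Gamma\le {\rm Aut}(K)$ is a subgroup acting without fixed vertices, edges or faces and $K/\Gamma$ is homeomorphic to the torus. ${\rm Aut}(X)$ denotes the automorphism group of the map $X$, acting on its vertex set $V(X)$. *)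

From Stdlib Require Import ZArith List.
Import ListNotations.
Open Scope Z_scope.

(** * Generic maps given by their vertex type and their face cycles.
    [face M s] holds when the list [s] is a face boundary cycle of [M]
    (listed from some starting vertex, in some direction). *)
Record Map := { vert : Type; face : list vert -> Prop }.

Definition cyc_eq {T} (s t : list T) : Prop := exists a b, s = a ++ b /\ t = b ++ a.
Definition cyc_eqr {T} (s t : list T) : Prop := cyc_eq s t \/ cyc_eq s (rev t).

Definition bij {A B} (f : A -> B) : Prop :=
  exists g : B -> A, (forall x, g (f x) = x) /\ (forall y, f (g y) = y).

Definition consec {T} (s : list T) (x y : T) : Prop := exists t, cyc_eq s (x :: y :: t).
Definition edge_of {T} (s : list T) (x y : T) : Prop := consec s x y \/ consec s y x.
Definition edge (M : Map) (x y : vert M) : Prop := exists s, face M s /\ edge_of s x y.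

Definition is_aut (M : Map) (f : vert M -> vert M) : Prop :=
  bij f /\ forall s, face M (map f s) <-> face M s.

Definition same_orbit (M : Map) (u v : vert M) : Prop := exists f, is_aut M f /\ f u = v.

Definition two_vertex_orbits (M : Map) : Prop :=
  exists u v, ~ same_orbit M u v /\ forall w, same_orbit M u w \/ same_orbit M v w.

Definition polyhedral (M : Map) : Prop :=
  (forall s, face M s -> NoDup s /\ (3 <= length s)%nat) /\
  forall s s', face M s -> face M s' -> ~ (forall x, In x s <-> In x s') ->
    (forall x, ~ (In x s /\ In x s')) \/
    (exists x, forall y, In y s /\ In y s' <-> y = x) \/
    (exists x y, edge_of s x y /\ edge_of s' x y /\
                 forall z, In z s /\ In z s' <-> z = x \/ z = y).

(** finitely many vertices (compactness of the surface) *)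
Definition finite_map (M : Map) : Prop :=
  exists (n : nat) (e : nat -> vert M), forall v, exists k, (k < n)%nat /\ e k = v.

(** orientable: one can choose one of the two orientations of each face so that
    every directed edge is traversed by at most one oriented face *)
Definition orientable (M : Map) : Prop :=
  exists O : list (vert M) -> Prop,
    (forall s, O s -> face M s) /\
    (forall s t, O s -> cyc_eq s t -> O t) /\
    (forall s, face M s -> O s \/ O (rev s)) /\
    (forall s, O s -> ~ O (rev s)) /\
    (forall x y t t', O (x :: y :: t) -> O (x :: y :: t') -> t = t').

Definition torus_map (M : Map) : Prop := polyhedral M /\ finite_map M /\ orientable M.

(** Lattice a = (sqrt3,0), b = (0,2), hexagons of side 1 centred at i a + j b.
    Per cell: A = (sqrt3/2,-1/2), B = (sqrt3/2,1/2) (type 3^2.6^2),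
              C = (0,1) (type 3.6.3.6). *)
Inductive vkind := kA | kB | kC.
Definition KV : Type := (Z * Z * vkind)%type.
Definition vA (i j : Z) : KV := (i, j, kA).
Definition vB (i j : Z) : KV := (i, j, kB).
Definition vC (i j : Z) : KV := (i, j, kC).

Inductive fkind := fH | fT1 | fT2.
Definition fcycle (i j : Z) (k : fkind) : list KV :=
  match k with
  | fH  => [vC i j; vB i j; vA i j; vC i (j - 1); vA (i - 1) j; vB (i - 1) j]
  | fT1 => [vB i j; vC (i + 1) j; vA i (j + 1)]
  | fT2 => [vB i j; vA i (j + 1); vC i j]
  end.

Definition K : Map :=
  {| vert := KV; face := fun s => exists i j k, cyc_eqr s (fcycle i j k) |}.

Definition aut_subgroup (G : (KV -> KV) -> Prop) : Prop :=
  (forall g, G g -> is_aut K g) /\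
  G (fun x => x) /\
  (forall g h, G g -> G h -> G (fun x => g (h x))) /\
  (forall g, G g -> exists h, G h /\ forall x, h (g x) = x /\ g (h x) = x).

Definition acts_freely (G : (KV -> KV) -> Prop) : Prop :=
  forall g, G g -> (exists x, g x <> x) ->
    (forall v, g v <> v) /\
    (forall u v, edge K u v -> ~ (g u = v /\ g v = u)) /\
    (forall s, face K s -> ~ (forall x, In x s -> In (g x) s)).

Definition orbitG (G : (KV -> KV) -> Prop) (v : KV) : KV -> Prop :=
  fun w => exists g, G g /\ g v = w.

Definition QV (G : (KV -> KV) -> Prop) : Type := {P : KV -> Prop | exists v, P = orbitG G v}.

Definition proj (G : (KV -> KV) -> Prop) (v : KV) : QV G :=
  exist _ (orbitG G v) (ex_intro _ v eq_refl).

Definition quotient (G : (KV -> KV) -> Prop) : Map :=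
  {| vert := QV G; face := fun s => exists t, face K t /\ s = map (proj G) t |}.

(** Every automorphism of the tiling K is a translation, possibly
    composed with the reflections in a horizontal and a vertical line: it must
    preserve the vertices of type 3.6.3.6 (the only ones whose two triangles do
    not share an edge), and an automorphism fixing a hexagon pointwise is the
    identity.  In a torus quotient K/Gamma the group Gamma contains no half-turn
    (it fixes a vertex, an edge or a face), no unit horizontal translation
    (the quotient would not be polyhedral) and no reflection (an orientation of
    the quotient gives all hexagons the same orientation, which a reflection
    reverses); hence Gamma consists of translations.  Then every translation
    and the half-turn of K normalise Gamma and descend to automorphisms of the
    quotient, which merge the images of all vertices of type 3^2.6^2 into one
    orbit and those of type 3.6.3.6 into another.  The two orbits are distinct
    because the quotient still distinguishes the two vertex types by their
    triangles. *)
From Stdlib Require Import ZArith List Lia Permutation.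
From Stdlib Require Import ProofIrrelevance FunctionalExtensionality PropExtensionality.
From Stdlib Require Import Classical IndefiniteDescription.
Import ListNotations.
Open Scope Z_scope.

(** * Cyclic lists *)

Section CyclicLists.
Context {T : Type}.
Implicit Types (s t u : list T) (x y : T).

Lemma cyc_eq_refl s : cyc_eq s s.
Proof. exists [], s. split; [reflexivity | now rewrite app_nil_r]. Qed.

Lemma cyc_eq_sym s t : cyc_eq s t -> cyc_eq t s.
Proof. intros [a [b [-> ->]]]. exists b, a. auto. Qed.

Lemma cyc_eq_trans s t u : cyc_eq s t -> cyc_eq t u -> cyc_eq s u.
Proof.
  intros [a [b [Hs Ht]]] [c [d [Ht' Hu]]]. subst s u.
  rewrite Ht' in Ht. symmetry in Ht.
  apply app_eq_app in Ht as [m [[H1 H2] | [H1 H2]]]; subst.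
  - exists (a ++ c), m. rewrite !app_assoc. auto.
  - exists m, (d ++ b). rewrite !app_assoc. auto.
Qed.

Lemma cyc_eq_rev s t : cyc_eq s t -> cyc_eq (rev s) (rev t).
Proof. intros [a [b [-> ->]]]. exists (rev b), (rev a). rewrite !rev_app_distr. auto. Qed.

Lemma cyc_eq_map {U} (f : T -> U) s t : cyc_eq s t -> cyc_eq (map f s) (map f t).
Proof. intros [a [b [-> ->]]]. exists (map f a), (map f b). rewrite !map_app. auto. Qed.

Lemma cyc_eq_perm s t : cyc_eq s t -> Permutation s t.
Proof. intros [a [b [-> ->]]]. apply Permutation_app_comm. Qed.

Lemma cyc_eq_rotate s t n : t = skipn n s ++ firstn n s -> cyc_eq s t.
Proof. intros ->. exists (firstn n s), (skipn n s). rewrite firstn_skipn. auto. Qed.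

Definition rotations s : list (list T) :=
  map (fun n => skipn n s ++ firstn n s) (seq 0 (S (length s))).

Lemma cyc_eq_In_rotations s t : cyc_eq s t -> In t (rotations s).
Proof.
  intros [a [b [-> ->]]]. apply in_map_iff. exists (length a). split.
  - rewrite skipn_app, firstn_app, skipn_all, firstn_all, Nat.sub_diag.
    simpl. now rewrite app_nil_r.
  - apply in_seq. rewrite length_app. lia.
Qed.

Lemma cyc_eq_rev_cons2 x y s : cyc_eq (rev (x :: y :: s)) (y :: x :: rev s).
Proof. exists (rev s), [y; x]. simpl. rewrite <- app_assoc. auto. Qed.

Lemma cyc_eq_cons_NoDup x s t : NoDup (x :: s) -> cyc_eq (x :: s) (x :: t) -> s = t.
Proof.
  intros Hn [a [b [H1 H2]]]. destruct a as [|z a].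
  - simpl in H1. rewrite app_nil_r in H2. subst b. congruence.
  - simpl in H1. injection H1 as -> ->. destruct b as [|z2 b].
    + simpl in H2. injection H2 as ->. now rewrite app_nil_r.
    + simpl in H2. injection H2 as -> ->. inversion Hn; subst.
      exfalso. apply H1. apply in_or_app. simpl; auto.
Qed.

Lemma cyc_eqr_perm s t : cyc_eqr s t -> Permutation s t.
Proof.
  intros [H | H]; apply cyc_eq_perm in H; auto.
  eapply perm_trans; [exact H |]. apply Permutation_sym, Permutation_rev.
Qed.

Lemma cyc_eqr_refl s : cyc_eqr s s.
Proof. left; apply cyc_eq_refl. Qed.

Lemma cyc_eqr_trans s t u : cyc_eqr s t -> cyc_eqr t u -> cyc_eqr s u.
Proof.
  intros [H1 | H1] [H2 | H2].
  - left; eapply cyc_eq_trans; eauto.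
  - right; eapply cyc_eq_trans; eauto.
  - right; eapply cyc_eq_trans; eauto. now apply cyc_eq_rev.
  - left; eapply cyc_eq_trans; eauto. apply cyc_eq_rev in H2.
    now rewrite rev_involutive in H2.
Qed.

Lemma cyc_eqr_map {U} (f : T -> U) s t : cyc_eqr s t -> cyc_eqr (map f s) (map f t).
Proof.
  intros [H | H]; [left | right]; apply (cyc_eq_map f) in H; auto.
  now rewrite map_rev in H.
Qed.

Lemma cyc_eqr_In s t x : cyc_eqr s t -> In x s -> In x t.
Proof. intros; eapply Permutation_in; [apply cyc_eqr_perm |]; eauto. Qed.

Lemma cyc_eqr_In_r s t x : cyc_eqr s t -> In x t -> In x s.
Proof. intros; eapply Permutation_in; [apply Permutation_sym, cyc_eqr_perm |]; eauto. Qed.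

Lemma cyc_eqr_length s t : cyc_eqr s t -> length s = length t.
Proof. intros; apply Permutation_length, cyc_eqr_perm; auto. Qed.

Lemma consec_cyc_eq s t x y : consec s x y -> cyc_eq s t -> consec t x y.
Proof.
  intros [u Hu] H. exists u. eapply cyc_eq_trans; [apply cyc_eq_sym; exact H | exact Hu].
Qed.

Lemma consec_rev s x y : consec (rev s) x y -> consec s y x.
Proof.
  intros [r Hr]. apply cyc_eq_rev in Hr. rewrite rev_involutive in Hr.
  exists (rev r). eapply cyc_eq_trans; [exact Hr |].
  simpl. rewrite <- app_assoc. simpl. exists (rev r), [y; x]. auto.
Qed.

Lemma consec_map {U} (f : T -> U) s x y : consec s x y -> consec (map f s) (f x) (f y).
Proof. intros [u Hu]. exists (map f u). apply (cyc_eq_map f) in Hu. exact Hu. Qed.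

Lemma consec_In s x y : consec s x y -> In x s /\ In y s.
Proof.
  intros [u Hu]. apply cyc_eq_perm, Permutation_sym in Hu.
  split; eapply Permutation_in; eauto; simpl; auto.
Qed.

Lemma consec_neq s x y : NoDup s -> consec s x y -> x <> y.
Proof.
  intros Hn [u Hu] ->. apply cyc_eq_perm in Hu. eapply Permutation_NoDup in Hn; eauto.
  inversion Hn; subst. simpl in *; tauto.
Qed.

Lemma edge_of_cyc_eqr s t x y : edge_of s x y -> cyc_eqr s t -> edge_of t x y.
Proof.
  intros He [H | H].
  - destruct He as [He | He]; [left | right]; eapply consec_cyc_eq; eauto.
  - destruct He as [He | He]; [right | left]; apply consec_rev; eapply consec_cyc_eq; eauto.
Qed.

Lemma edge_of_map {U} (f : T -> U) s x y : edge_of s x y -> edge_of (map f s) (f x) (f y).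
Proof. intros [H | H]; [left | right]; now apply consec_map. Qed.

Lemma edge_of_In s x y : edge_of s x y -> In x s /\ In y s.
Proof. intros [H | H]; apply consec_In in H; tauto. Qed.

Lemma edge_of_neq s x y : NoDup s -> edge_of s x y -> x <> y.
Proof. intros Hn [H | H]; apply consec_neq in H; auto. Qed.

Lemma map_eq_id_In (k : T -> T) s : map k s = s -> forall x, In x s -> k x = x.
Proof.
  induction s; simpl; intros H x Hx; [contradiction |]. injection H as H1 H2.
  destruct Hx as [<- | Hx]; auto.
Qed.

(* Fixing two consecutive vertices of a cycle kills both its rotations and its
   reflections, so a map preserving the cycle fixes it pointwise. *)
Lemma cycle_fixed_of_edge_fixed (k : T -> T) s x y :
  NoDup s -> (3 <= length s)%nat -> consec s x y -> k x = x -> k y = y ->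
  cyc_eqr (map k s) s -> forall v, In v s -> k v = v.
Proof.
  intros Hn Hl [r Hr] Hx Hy Hc.
  assert (Hp : Permutation s (x :: y :: r)) by now apply cyc_eq_perm.
  assert (Hn0 : NoDup (x :: y :: r)) by (eapply Permutation_NoDup; eauto).
  assert (Hlen : (1 <= length r)%nat)
    by (apply Permutation_length in Hp; simpl in Hp; lia).
  assert (Hc0 : cyc_eqr (x :: y :: map k r) (x :: y :: r)).
  { eapply cyc_eqr_trans; [| eapply cyc_eqr_trans; [exact Hc | left; exact Hr]].
    left. apply cyc_eq_sym. apply (cyc_eq_map k) in Hr. simpl in Hr.
    rewrite Hx, Hy in Hr. exact Hr. }
  assert (Hr' : map k r = r).
  { destruct Hc0 as [Hc0 | Hc0].
    - apply cyc_eq_sym, cyc_eq_cons_NoDup in Hc0; auto. congruence.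
    - exfalso. simpl in Hc0. rewrite <- app_assoc in Hc0. simpl in Hc0.
      assert (H2 : cyc_eq (x :: (rev r ++ [y])) (x :: y :: map k r)).
      { eapply cyc_eq_trans; [| apply cyc_eq_sym; exact Hc0].
        exists [x], (rev r ++ [y]). simpl. rewrite <- app_assoc. auto. }
      assert (Hn2 : NoDup (x :: (rev r ++ [y]))).
      { eapply Permutation_NoDup; [| exact Hn0]. apply perm_skip.
        eapply perm_trans; [apply (Permutation_app_comm [y] r) |].
        apply Permutation_app_tail, Permutation_rev. }
      apply cyc_eq_cons_NoDup in H2; auto.
      destruct (rev r) as [| z w] eqn:E.
      + apply (f_equal (@length T)) in E. rewrite length_rev in E. simpl in E. lia.
      + simpl in H2. injection H2 as -> _.
        apply NoDup_cons_iff in Hn0 as [_ Hn0]. apply NoDup_cons_iff in Hn0 as [Hn0 _].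
        apply Hn0, in_rev. rewrite E. simpl; auto. }
  intros v Hv. apply (Permutation_in _ Hp) in Hv. simpl in Hv.
  destruct Hv as [<- | [<- | Hv]]; auto. eapply map_eq_id_In; eauto.
Qed.

Lemma three_common_vertices_not_polyhedral s s' a b c :
  a <> b -> a <> c -> b <> c ->
  In a s -> In a s' -> In b s -> In b s' -> In c s -> In c s' ->
  ~ ((forall x, ~ (In x s /\ In x s')) \/
     (exists x, forall y, In y s /\ In y s' <-> y = x) \/
     (exists x y, edge_of s x y /\ edge_of s' x y /\
                  forall z, In z s /\ In z s' <-> z = x \/ z = y)).
Proof.
  intros dab dac dbc a1 a2 b1 b2 c1 c2 [H | [[x H] | [x [y [_ [_ H]]]]]].
  - apply (H a); auto.
  - apply dab. rewrite (proj1 (H a) (conj a1 a2)), (proj1 (H b) (conj b1 b2)). auto.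
  - destruct (proj1 (H a) (conj a1 a2)), (proj1 (H b) (conj b1 b2)),
      (proj1 (H c) (conj c1 c2)); subst; auto.
Qed.

End CyclicLists.

(** * Automorphisms and orientations of maps *)

Section Maps.
Variable M : Map.

Lemma id_aut : is_aut M (fun x => x).
Proof. split; [exists (fun x => x); auto |]. intros s; rewrite map_id; tauto. Qed.

Lemma comp_aut (f g : vert M -> vert M) :
  is_aut M f -> is_aut M g -> is_aut M (fun x => f (g x)).
Proof.
  intros [[f' [Hf1 Hf2]] Hf] [[g' [Hg1 Hg2]] Hg]. split.
  - exists (fun x => g' (f' x)). split; intros; congruence.
  - intros s. rewrite <- map_map, Hf, Hg. tauto.
Qed.

Lemma inv_aut (f f' : vert M -> vert M) :
  is_aut M f -> (forall x, f (f' x) = x) -> (forall x, f' (f x) = x) -> is_aut M f'.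
Proof.
  intros [_ Hf] H1 H2. split; [exists f; auto |].
  intros s. rewrite <- (Hf (map f' s)), map_map.
  rewrite (map_ext _ (fun x => x)), map_id by auto. tauto.
Qed.

Lemma aut_inj f : is_aut M f -> forall x y, f x = f y -> x = y.
Proof. intros [[f' [H1 _]] _] x y E. apply (f_equal f') in E. now rewrite !H1 in E. Qed.

Lemma edge_aut f x y : is_aut M f -> edge M x y -> edge M (f x) (f y).
Proof.
  intros Hf [s [Hs He]]. exists (map f s). split; [apply (proj2 Hf); auto |].
  now apply edge_of_map.
Qed.

(* At a vertex of type 3^2.6^2 the two triangles share an edge; at a vertex of
   type 3.6.3.6 they share only the vertex. *)
Definition has_adjacent_triangles (v : vert M) : Prop :=
  exists s s' y z, face M s /\ face M s' /\ length s = 3%nat /\ length s' = 3%nat /\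
    edge_of s v y /\ edge_of s' v y /\ In z s /\ ~ In z s'.

Lemma has_adjacent_triangles_aut f v :
  is_aut M f -> has_adjacent_triangles v -> has_adjacent_triangles (f v).
Proof.
  intros [[f' [Hf1 Hf2]] Hf] [s [s' [y [z [H1 [H2 [H3 [H4 [H5 [H6 [H7 H8]]]]]]]]]]].
  exists (map f s), (map f s'), (f y), (f z).
  repeat split; try (apply Hf; assumption); rewrite ?length_map; auto using edge_of_map.
  - now apply in_map.
  - intros Hin. apply in_map_iff in Hin as [w [Hw Hw']].
    apply (f_equal f') in Hw. rewrite !Hf1 in Hw. subst; auto.
Qed.

Lemma no_adjacent_triangles v t1 t2 :
  (forall s, face M s -> NoDup s) ->
  (forall s, face M s -> length s = 3%nat -> In v s -> cyc_eqr s t1 \/ cyc_eqr s t2) ->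
  (forall y, In y t1 -> In y t2 -> y = v) -> ~ has_adjacent_triangles v.
Proof.
  intros Hnd Hf Hy [s [s' [y [z [H1 [H2 [H3 [H4 [H5 [H6 [H7 H8]]]]]]]]]]].
  assert (Hyv : y <> v) by (intro; subst; eapply edge_of_neq; eauto).
  destruct (edge_of_In _ _ _ H5) as [Hv Hys], (edge_of_In _ _ _ H6) as [Hv' Hys'].
  destruct (Hf s H1 H3 Hv) as [A | A], (Hf s' H2 H4 Hv') as [B | B].
  - exact (H8 (cyc_eqr_In_r _ _ z B (cyc_eqr_In _ _ z A H7))).
  - exact (Hyv (Hy y (cyc_eqr_In _ _ y A Hys) (cyc_eqr_In _ _ y B Hys'))).
  - exact (Hyv (Hy y (cyc_eqr_In _ _ y B Hys') (cyc_eqr_In _ _ y A Hys))).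
  - exact (H8 (cyc_eqr_In_r _ _ z B (cyc_eqr_In _ _ z A H7))).
Qed.

Definition orientation (O : list (vert M) -> Prop) : Prop :=
  (forall s, O s -> face M s) /\
  (forall s t, O s -> cyc_eq s t -> O t) /\
  (forall s, face M s -> O s \/ O (rev s)) /\
  (forall s, O s -> ~ O (rev s)) /\
  (forall x y t t', O (x :: y :: t) -> O (x :: y :: t') -> t = t').

Section Orientation.
Variable O : list (vert M) -> Prop.
Hypothesis HO : orientation O.

Lemma orientation_same_direction s s' x y t t' :
  face M s -> face M s' -> cyc_eq s (x :: y :: t) -> cyc_eq s' (x :: y :: t') -> t <> t' ->
  (O s <-> ~ O s').
Proof.
  destruct HO as [_ [O2 [O3 [_ O5]]]]. intros Hs Hs' c1 c2 Hne. split.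
  - intros H1 H2. exact (Hne (O5 _ _ _ _ (O2 _ _ H1 c1) (O2 _ _ H2 c2))).
  - intros H2. destruct (O3 _ Hs) as [H1 | H1]; auto. exfalso.
    destruct (O3 _ Hs') as [H3 | H3]; [contradiction |].
    apply cyc_eq_rev in c1, c2.
    pose proof (O2 _ _ (O2 _ _ H1 c1) (cyc_eq_rev_cons2 _ _ _)) as K1.
    pose proof (O2 _ _ (O2 _ _ H3 c2) (cyc_eq_rev_cons2 _ _ _)) as K2.
    pose proof (O5 _ _ _ _ K1 K2) as E. apply (f_equal (@rev _)) in E.
    rewrite !rev_involutive in E. auto.
Qed.

Lemma orientation_opposite_direction s s' x y t t' :
  face M s -> face M s' -> cyc_eq s (x :: y :: t) -> cyc_eq s' (y :: x :: t') ->
  t <> rev t' -> (O s <-> O s').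
Proof.
  destruct HO as [_ [O2 [O3 [_ O5]]]]. intros Hs Hs' c1 c2 Hne. split.
  - intros H1. destruct (O3 _ Hs') as [H2 | H2]; auto. exfalso.
    apply cyc_eq_rev in c2.
    pose proof (O2 _ _ (O2 _ _ H2 c2) (cyc_eq_rev_cons2 _ _ _)) as K2.
    exact (Hne (O5 _ _ _ _ (O2 _ _ H1 c1) K2)).
  - intros H2. destruct (O3 _ Hs) as [H1 | H1]; auto. exfalso.
    apply cyc_eq_rev in c1.
    pose proof (O2 _ _ (O2 _ _ H1 c1) (cyc_eq_rev_cons2 _ _ _)) as K1.
    pose proof (O5 _ _ _ _ K1 (O2 _ _ H2 c2)) as E.
    apply Hne. rewrite <- E, rev_involutive. auto.
Qed.

End Orientation.

End Maps.

(** * The tiling K and its automorphisms *)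

Definition Tr (p q : Z) (v : KV) : KV := let '(i, j, k) := v in (i + p, j + q, k).
(* Rx and Ry are the reflections of K in the lines x = 0 and y = 1. *)
Definition Rx (v : KV) : KV :=
  match v with
  | (i, j, kC) => (- i, j, kC)
  | (i, j, kA) => (- i - 1, j, kA)
  | (i, j, kB) => (- i - 1, j, kB)
  end.
Definition Ry (v : KV) : KV :=
  match v with
  | (i, j, kC) => (i, - j, kC)
  | (i, j, kA) => (i, 1 - j, kB)
  | (i, j, kB) => (i, 1 - j, kA)
  end.
Definition sym (a b : bool) (p q : Z) (v : KV) : KV :=
  Tr p q ((if a then Rx else id) ((if b then Ry else id) v)).

Definition fc (F : Z * Z * fkind) : list KV := let '(i, j, k) := F in fcycle i j k.

Definition faces_at (v : KV) : list (Z * Z * fkind) :=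
  match v with
  | (p, q, kC) => [(p, q, fH); (p, q + 1, fH); (p - 1, q, fT1); (p, q, fT2)]
  | (p, q, kA) => [(p, q, fH); (p + 1, q, fH); (p, q - 1, fT1); (p, q - 1, fT2)]
  | (p, q, kB) => [(p, q, fH); (p + 1, q, fH); (p, q, fT1); (p, q, fT2)]
  end.

Ltac simpl_kv :=
  cbn [map skipn firstn app rev fcycle vA vB vC Ry Rx Tr fc id sym faces_at In length] in *;
  unfold vA, vB, vC in *.
Ltac split_eq := repeat match goal with
  | |- (_, _) = (_, _) => f_equal
  | |- cons _ _ = cons _ _ => f_equal
  | |- proj _ _ = proj _ _ => f_equal
  end.
Ltac solve_kv_eq := simpl_kv; split_eq; try reflexivity; lia.
Ltac destruct_or := repeat match goal with
  | H : _ \/ _ |- _ => destruct H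
  | H : False |- _ => contradiction
  end.
Ltac inject_kv := repeat match goal with
  | E : (_, _, _) = (_, _, _) |- _ => first [discriminate E | injection E; intros; clear E]
  end.
Ltac solve_rotation := first [
  apply (cyc_eq_rotate _ _ 0); solve_kv_eq | apply (cyc_eq_rotate _ _ 1); solve_kv_eq |
  apply (cyc_eq_rotate _ _ 2); solve_kv_eq | apply (cyc_eq_rotate _ _ 3); solve_kv_eq |
  apply (cyc_eq_rotate _ _ 4); solve_kv_eq | apply (cyc_eq_rotate _ _ 5); solve_kv_eq ].
Ltac solve_consec := unfold consec; eexists; solve_rotation.
Ltac solve_In := simpl_kv; repeat (first [left; solve [split_eq; try reflexivity; lia] | right]).
Ltac solve_In_cases :=
  simpl_kv; destruct_or; try subst; try reflexivity; inject_kv; try lia;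
  try (split_eq; try reflexivity; lia).
Ltac solve_not_In := let H := fresh in intro H; solve_In_cases.

Lemma fc_face F : face K (fc F).
Proof. destruct F as [[i j] k]. exists i, j, k. apply cyc_eqr_refl. Qed.

Lemma fc_NoDup F : NoDup (fc F).
Proof.
  destruct F as [[i j] []]; simpl_kv; repeat constructor;
    let H := fresh in intro H; simpl_kv; destruct_or; inject_kv; lia.
Qed.

Lemma fc_length F : (3 <= length (fc F))%nat.
Proof. destruct F as [[i j] []]; simpl; lia. Qed.

Lemma In_fc_faces_at F v : In v (fc F) -> In F (faces_at v).
Proof.
  destruct F as [[i j] k], v as [[p q] kv]. intros H.
  destruct k; simpl_kv; destruct_or; inject_kv; subst; solve_In.
Qed.

Lemma face_K_at s v : face K s -> In v s -> exists F, In F (faces_at v) /\ cyc_eqr s (fc F).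
Proof.
  intros [i [j [k Hs]]] Hv. exists (i, j, k). split; [| exact Hs].
  apply In_fc_faces_at, (cyc_eqr_In _ _ _ Hs Hv).
Qed.

Lemma face_K_NoDup s : face K s -> NoDup s.
Proof.
  intros [i [j [k Hs]]].
  eapply Permutation_NoDup; [apply Permutation_sym, cyc_eqr_perm; exact Hs |].
  apply (fc_NoDup (i, j, k)).
Qed.

Lemma is_aut_K_of_faces (f f' : KV -> KV) :
  (forall x, f (f' x) = x) -> (forall x, f' (f x) = x) ->
  (forall F, exists F', cyc_eqr (map f (fc F)) (fc F')) ->
  (forall F, exists F', cyc_eqr (map f' (fc F)) (fc F')) ->
  is_aut K f.
Proof.
  intros H1 H2 Hf Hf'. split; [exists f'; auto |]. intros s. split.
  - intros [i [j [k Hs]]].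
    apply (cyc_eqr_map f') in Hs. rewrite map_map in Hs.
    rewrite (map_ext _ (fun x => x)), map_id in Hs by auto.
    destruct (Hf' (i, j, k)) as [[[i' j'] k'] H]. exists i', j', k'.
    eapply cyc_eqr_trans; eauto.
  - intros [i [j [k Hs]]]. apply (cyc_eqr_map f) in Hs.
    destruct (Hf (i, j, k)) as [[[i' j'] k'] H]. exists i', j', k'.
    eapply cyc_eqr_trans; eauto.
Qed.

Lemma Tr_aut p q : is_aut K (Tr p q).
Proof.
  apply (is_aut_K_of_faces _ (Tr (- p) (- q))); try (intros [[i j] k]; solve_kv_eq).
  - intros [[i j] k]. exists (i + p, j + q, k). left; destruct k; solve_rotation.
  - intros [[i j] k]. exists (i - p, j - q, k). left; destruct k; solve_rotation.
Qed.

Lemma Rx_face F : exists F', cyc_eqr (map Rx (fc F)) (fc F').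
Proof.
  destruct F as [[i j] []];
    [exists (- i, j, fH) | exists (- i - 1, j, fT2) | exists (- i - 1, j, fT1)];
    right; solve_rotation.
Qed.

Lemma Ry_face F : exists F', cyc_eqr (map Ry (fc F)) (fc F').
Proof.
  destruct F as [[i j] []];
    [exists (i, 1 - j, fH) | exists (i, - j, fT1) | exists (i, - j, fT2)];
    right; solve_rotation.
Qed.

Lemma Rx_aut : is_aut K Rx.
Proof.
  apply (is_aut_K_of_faces _ Rx); auto using Rx_face; intros [[i j] []]; solve_kv_eq.
Qed.

Lemma Ry_aut : is_aut K Ry.
Proof.
  apply (is_aut_K_of_faces _ Ry); auto using Ry_face; intros [[i j] []]; solve_kv_eq.
Qed.

Lemma sym_aut a b p q : is_aut K (sym a b p q).
Proof.
  apply (comp_aut K (Tr p q)); [apply Tr_aut |].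
  apply (comp_aut K (if a then Rx else id) (if b then Ry else id));
    [destruct a; [apply Rx_aut | apply id_aut] | destruct b; [apply Ry_aut | apply id_aut]].
Qed.

Lemma sym00_involutive a b x : sym a b 0 0 (sym a b 0 0 x) = x.
Proof. destruct a, b, x as [[i j] []]; solve_kv_eq. Qed.

Lemma Tr_sym00 a b p q x : Tr p q (sym a b 0 0 x) = sym a b p q x.
Proof. destruct a, b, x as [[i j] []]; solve_kv_eq. Qed.

Lemma Tr_eq_inv p q i j k i' j' k' :
  Tr p q (i, j, k) = (i', j', k') -> i + p = i' /\ j + q = j' /\ k = k'.
Proof. simpl. intros H. injection H. intros. subst. auto. Qed.

Lemma Tr_opp p q x : Tr p q (Tr (- p) (- q) x) = x.
Proof. destruct x as [[i j] []]; solve_kv_eq. Qed.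

Lemma C_no_adjacent_triangles : ~ has_adjacent_triangles K (0, 0, kC).
Proof.
  apply (no_adjacent_triangles K _ (fc (-1, 0, fT1)) (fc (0, 0, fT2)));
    [apply face_K_NoDup | | intros y H1 H2; solve_In_cases].
  intros s Hs Hl Hv. destruct (face_K_at s _ Hs Hv) as [F [HF Hc]].
  apply cyc_eqr_length in Hc as Hl'. simpl_kv.
  destruct_or; subst F; simpl_kv; auto; rewrite Hl in Hl'; discriminate.
Qed.

Lemma A_adjacent_triangles i j : has_adjacent_triangles K (i, j, kA).
Proof.
  exists (fc (i, j - 1, fT1)), (fc (i, j - 1, fT2)), (i, j - 1, kB), (i + 1, j - 1, kC).
  repeat split; try apply fc_face; try reflexivity;
    [left | right | simpl_kv; auto | solve_not_In]; solve_consec.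
Qed.

Lemma B_adjacent_triangles i j : has_adjacent_triangles K (i, j, kB).
Proof.
  exists (fc (i, j, fT1)), (fc (i, j, fT2)), (i, j + 1, kA), (i + 1, j, kC).
  repeat split; try apply fc_face; try reflexivity;
    [right | left | simpl_kv; auto | solve_not_In]; solve_consec.
Qed.

Lemma aut_K_C00 g : is_aut K g -> exists p q, g (0, 0, kC) = (p, q, kC).
Proof.
  intros Hg. pose proof Hg as [[g' [H1 H2]] _].
  assert (Hg' : is_aut K g') by (eapply inv_aut; eauto).
  destruct (g (0, 0, kC)) as [[p q] []] eqn:Eg; eauto; exfalso;
    apply C_no_adjacent_triangles; rewrite <- (H1 (0, 0, kC)), Eg;
    apply has_adjacent_triangles_aut; auto using A_adjacent_triangles, B_adjacent_triangles.
Qed.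

Lemma edge_C00 y : edge K (0, 0, kC) y ->
  y = (0, 0, kB) \/ y = (-1, 0, kB) \/ y = (0, 1, kA) \/ y = (-1, 1, kA).
Proof.
  intros [s [Hs He]]. destruct (edge_of_In _ _ _ He) as [Hv _].
  destruct (face_K_at s _ Hs Hv) as [F [HF Hc]].
  apply (edge_of_cyc_eqr _ _ _ _ He) in Hc. clear He Hs Hv.
  simpl_kv. destruct_or; subst F;
    destruct Hc as [[t Ht] | [t Ht]]; apply cyc_eq_In_rotations in Ht; cbn in Ht;
    unfold vA, vB, vC in *; destruct_or;
    repeat match goal with E : _ :: _ = _ :: _ |- _ => injection E; intros; clear E end;
    subst; inject_kv; try discriminate; try lia;
    repeat (first [left; reflexivity | right]); reflexivity.
Qed.

Definition fixes_face (k : KV -> KV) F : Prop := forall v, In v (fc F) -> k v = v.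

Lemma fixes_face_of_edge k F x y : consec (fc F) x y -> k x = x -> k y = y ->
  cyc_eqr (map k (fc F)) (fc F) -> fixes_face k F.
Proof. intros. intros v Hv. eapply cycle_fixed_of_edge_fixed; eauto using fc_NoDup, fc_length. Qed.

Section FixedFaces.
Variable k : KV -> KV.
Hypothesis Hk : is_aut K k.

(* An automorphism fixing an edge xy maps the face F' through xy to a face
   through xy; if the only faces through xy are F' and an already fixed F, and
   F' has a vertex z outside F, that face must be F' itself. *)
Lemma fixes_face_across F F' x y z : fixes_face k F -> consec (fc F') x y ->
  In x (fc F) -> In y (fc F) -> In z (fc F') -> ~ In z (fc F) ->
  (forall F0, In F0 (faces_at x) -> In y (fc F0) -> F0 = F \/ F0 = F') -> fixes_face k F'.
Proof.
  intros HF Hc Hx Hy Hz Hz' Hfa.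
  assert (kx : k x = x) by auto. assert (ky : k y = y) by auto.
  assert (Hs : face K (map k (fc F'))) by apply (proj2 Hk), fc_face.
  destruct (consec_In _ _ _ Hc) as [Hx' Hy'].
  assert (Hxs : In x (map k (fc F'))) by (rewrite <- kx; now apply in_map).
  assert (Hys : In y (map k (fc F'))) by (rewrite <- ky; now apply in_map).
  destruct (face_K_at _ _ Hs Hxs) as [F0 [HF0 Hc0]].
  destruct (Hfa F0 HF0 (cyc_eqr_In _ _ _ Hc0 Hys)) as [-> | ->].
  - exfalso. assert (Hkz : In (k z) (fc F)) by (apply (cyc_eqr_In _ _ _ Hc0); now apply in_map).
    pose proof (HF _ Hkz) as E. apply (aut_inj _ _ Hk) in E. rewrite E in Hkz. auto.
  - eapply fixes_face_of_edge; eauto.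
Qed.

Lemma fixes_face_of_unique F x y : consec (fc F) x y -> k x = x -> k y = y ->
  (forall F0, In F0 (faces_at x) -> In y (fc F0) -> length (fc F0) = length (fc F) -> F0 = F) ->
  fixes_face k F.
Proof.
  intros Hc kx ky Hfa.
  assert (Hs : face K (map k (fc F))) by apply (proj2 Hk), fc_face.
  destruct (consec_In _ _ _ Hc) as [Hx' Hy'].
  assert (Hxs : In x (map k (fc F))) by (rewrite <- kx; now apply in_map).
  assert (Hys : In y (map k (fc F))) by (rewrite <- ky; now apply in_map).
  destruct (face_K_at _ _ Hs Hxs) as [F0 [HF0 Hc0]].
  assert (HL : length (fc F0) = length (fc F))
    by (pose proof (cyc_eqr_length _ _ Hc0) as L; rewrite length_map in L; auto).
  rewrite (Hfa F0 HF0 (cyc_eqr_In _ _ _ Hc0 Hys) HL) in Hc0.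
  eapply fixes_face_of_edge; eauto.
Qed.

Ltac solve_faces_through :=
  let F0 := fresh in let HF0 := fresh in let Hy := fresh in
  intros F0 HF0 Hy; simpl_kv; destruct_or; subst F0; simpl_kv; destruct_or; inject_kv;
  try discriminate;
  first [left; split_eq; try reflexivity; lia | right; split_eq; try reflexivity; lia | exfalso; lia].
Ltac solve_across :=
  first [assumption | solve [solve_consec] | solve [solve_In] | solve [solve_not_In]
        | solve [solve_faces_through]].

Lemma fixes_face_right i j : fixes_face k (i, j, fH) -> fixes_face k (i + 1, j, fH).
Proof.
  intros. apply (fixes_face_across (i, j, fH) _ (i, j, kA) (i, j, kB) (i + 1, j, kC));
    solve_across.
Qed.

Lemma fixes_face_left i j : fixes_face k (i, j, fH) -> fixes_face k (i - 1, j, fH).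
Proof.
  intros. apply (fixes_face_across (i, j, fH) _ (i - 1, j, kB) (i - 1, j, kA) (i - 1, j, kC));
    solve_across.
Qed.

Lemma fixes_face_up i j : fixes_face k (i, j, fH) -> fixes_face k (i, j + 1, fH).
Proof.
  intros. apply (fixes_face_across (i, j, fT2) _ (i, j + 1, kA) (i, j, kC) (i, j + 1, kC));
    [| solve_across ..].
  apply (fixes_face_across (i, j, fH) _ (i, j, kC) (i, j, kB) (i, j + 1, kA)); solve_across.
Qed.

Lemma fixes_face_down i j : fixes_face k (i, j, fH) -> fixes_face k (i, j - 1, fH).
Proof.
  intros. apply (fixes_face_across (i, j - 1, fT2) _ (i, j - 1, kC) (i, j - 1, kB) (i, j - 1, kA));
    [| solve_across ..].
  apply (fixes_face_across (i, j, fH) _ (i, j, kA) (i, j - 1, kC) (i, j - 1, kB)); solve_across.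
Qed.

Lemma aut_K_fixing_hexagon_id : fixes_face k (0, 0, fH) -> forall v, k v = v.
Proof.
  intros H0.
  assert (Hcol : forall j, fixes_face k (0, j, fH))
    by (apply Z.peano_ind; [| intros j Hj; apply fixes_face_up | intros j Hj; apply fixes_face_down];
        auto).
  assert (Hall : forall i j, fixes_face k (i, j, fH))
    by (intros i j; revert i; apply Z.peano_ind;
        [| intros i Hi; apply fixes_face_right | intros i Hi; apply fixes_face_left]; auto).
  intros [[i j] kd]. apply (Hall i j). destruct kd; solve_In.
Qed.

End FixedFaces.

Lemma aut_K_is_sym g : is_aut K g -> exists a b p q, forall v, g v = sym a b p q v.
Proof.
  intros Hg. destruct (aut_K_C00 g Hg) as [p [q Hpq]].
  set (h := fun v => Tr (- p) (- q) (g v)).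
  assert (Hh : is_aut K h) by (apply (comp_aut K (Tr (- p) (- q)) g); auto using Tr_aut).
  assert (hC : h (0, 0, kC) = (0, 0, kC)) by (unfold h; rewrite Hpq; solve_kv_eq).
  assert (Hab : exists a b, sym a b 0 0 (0, 0, kB) = h (0, 0, kB)).
  { assert (HE : edge K (0, 0, kC) (h (0, 0, kB))).
    { rewrite <- hC. apply edge_aut; auto. exists (fc (0, 0, fH)).
      split; [apply fc_face | left; solve_consec]. }
    apply edge_C00 in HE. destruct_or; rewrite H;
      [exists false, false | exists true, false | exists false, true | exists true, true];
      solve_kv_eq. }
  destruct Hab as [a [b Hab]].
  set (k := fun v => sym a b 0 0 (h v)).
  assert (Hk : is_aut K k) by (apply (comp_aut K (sym a b 0 0) h); auto using sym_aut).
  assert (Hid : forall v, k v = v).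
  { apply aut_K_fixing_hexagon_id; auto.
    apply (fixes_face_of_unique k Hk _ (0, 0, kC) (0, 0, kB)).
    - solve_consec.
    - unfold k; rewrite hC; destruct a, b; solve_kv_eq.
    - unfold k; rewrite <- Hab; apply sym00_involutive.
    - intros F0 HF0 Hy HL. simpl_kv; destruct_or; subst F0; simpl_kv; destruct_or;
        inject_kv; try discriminate; try (split_eq; lia); discriminate. }
  exists a, b, p, q. intros v. specialize (Hid v). unfold k, h in Hid.
  apply (f_equal (sym a b 0 0)) in Hid. rewrite sym00_involutive in Hid.
  apply (f_equal (Tr p q)) in Hid. rewrite Tr_opp in Hid. rewrite Hid. apply Tr_sym00.
Qed.

(** * The quotient K / G *)

Section Quotient.
Variable G : (KV -> KV) -> Prop.
Hypothesis HG : aut_subgroup G.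
Hypothesis HF : acts_freely G.
Hypothesis HT : torus_map (quotient G).

Lemma QV_eq (P Q : QV G) : proj1_sig P = proj1_sig Q -> P = Q.
Proof.
  destruct P as [P HP], Q as [Q HQ]; simpl; intros ->. f_equal. apply proof_irrelevance.
Qed.

Lemma proj_G g v : G g -> proj G (g v) = proj G v.
Proof.
  destruct HG as [_ [Hid [Hc Hinv]]]. intros Hg. apply QV_eq; simpl.
  apply functional_extensionality; intros w. apply propositional_extensionality. split.
  - intros [h [Hh <-]]. exists (fun x => h (g x)). auto.
  - intros [h [Hh <-]]. destruct (Hinv g Hg) as [g' [Hg' Hgg]].
    exists (fun x => h (g' x)). split; [auto |]. now rewrite (proj1 (Hgg v)).
Qed.

Lemma proj_eq_G x y : proj G x = proj G y -> exists g, G g /\ g x = y.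
Proof.
  intros E. apply (f_equal (@proj1_sig _ _)) in E. simpl in E.
  assert (H : orbitG G y y) by (exists (fun x => x); split; [apply HG | reflexivity]).
  rewrite <- E in H. exact H.
Qed.

Definition rep (P : QV G) : KV :=
  proj1_sig (constructive_indefinite_description _ (proj2_sig P)).

Lemma proj_rep P : proj G (rep P) = P.
Proof.
  apply QV_eq. unfold rep. destruct (constructive_indefinite_description _ _) as [v Hv].
  simpl. auto.
Qed.

Lemma quotient_face F : face (quotient G) (map (proj G) (fc F)).
Proof. exists (fc F). split; [apply fc_face | reflexivity]. Qed.

Lemma quotient_face_NoDup F : NoDup (map (proj G) (fc F)).
Proof. apply (proj1 (proj1 HT)), quotient_face. Qed.

Lemma G_is_sym g : G g -> exists a b p q, forall v, g v = sym a b p q v.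
Proof. intros Hg. apply aut_K_is_sym, (proj1 HG), Hg. Qed.

(* A half-turn of K fixes a C vertex, the midpoint of an edge or the centre of a
   hexagon, according to the parities of its translation part. *)
Lemma G_no_halfturn g p q : G g -> ~ (forall v, g v = sym true true p q v).
Proof.
  intros Hg Hs.
  assert (Hn : exists x, g x <> x) by (exists (0, 0, kA); rewrite Hs; simpl_kv; discriminate).
  destruct (HF g Hg Hn) as [Hv [He Hf]].
  destruct (Z.Even_or_Odd p) as [[k Hk] | [k Hk]], (Z.Even_or_Odd q) as [[l Hl] | [l Hl]];
    subst p q.
  - apply (Hv (k, l, kC)). rewrite Hs; solve_kv_eq.
  - apply (Hf (fc (k, l + 1, fH)) (fc_face _)). intros x Hx. rewrite Hs.
    simpl_kv; destruct_or; subst; simpl_kv; solve_In.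
  - apply (He (k, l, kB) (k, l + 1, kA)).
    + exists (fc (k, l, fT2)). split; [apply fc_face | left; solve_consec].
    + rewrite !Hs; simpl_kv; split; split_eq; lia.
  - apply (He (k, l + 1, kA) (k, l + 1, kB)).
    + exists (fc (k, l + 1, fH)). split; [apply fc_face | right; solve_consec].
    + rewrite !Hs; simpl_kv; split; split_eq; lia.
Qed.

(* The triangle (m, j, fT2) and the hexagon (m + 1, j) would have three common
   vertices in the quotient. *)
Lemma quotient_triangle_hexagon_distinct m j :
  proj G (m + 1, j, kC) = proj G (m, j, kC) ->
  proj G (m + 1, j, kB) = proj G (m, j + 1, kA) -> False.
Proof.
  intros e1 e2.
  set (s := map (proj G) (fc (m, j, fT2))). set (s' := map (proj G) (fc (m + 1, j, fH))).
  assert (Ns : NoDup s) by apply quotient_face_NoDup.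
  assert (Hne : ~ (forall x, In x s <-> In x s')).
  { intros Heq. assert (L : (length s' <= length s)%nat).
    { apply NoDup_incl_length; [apply quotient_face_NoDup |].
      intros x Hx; apply Heq; auto. }
    unfold s, s' in L; simpl_kv; simpl in L; lia. }
  apply (three_common_vertices_not_polyhedral s s'
           (proj G (m, j, kB)) (proj G (m, j + 1, kA)) (proj G (m, j, kC)));
    [| | | | | | | | | exact (proj2 (proj1 HT) s s' (quotient_face _) (quotient_face _) Hne)];
    unfold s, s' in *; simpl_kv;
    apply NoDup_cons_iff in Ns as [N1 Ns]; apply NoDup_cons_iff in Ns as [N2 _].
  - intro E3; apply N1; rewrite E3; simpl; auto.
  - intro E3; apply N1; rewrite E3; simpl; auto.
  - intro E3; apply N2; rewrite E3; simpl; auto.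
  - auto.
  - do 5 right; left. f_equal. split_eq; lia.
  - auto.
  - right; left. auto.
  - auto.
  - left. auto.
Qed.

(* A translation would identify two vertices of the hexagon (m, j), and a
   reflection in a vertical line would fix a vertex. *)
Lemma G_no_unit_shift g m j : G g -> g (m, j, kC) <> (m + 1, j, kC).
Proof.
  intros Hg Hgm. destruct (G_is_sym g Hg) as [a [b [p [q Hs]]]].
  pose proof Hgm as E. rewrite Hs in E.
  destruct a, b; simpl_kv; injection E; intros E1 E2.
  - exact (G_no_halfturn g p q Hg Hs).
  - assert (Hn : exists x, g x <> x)
      by (exists (m, j, kC); rewrite Hgm; intro E3; injection E3; lia).
    apply ((proj1 (HF g Hg Hn)) (m, j, kA)). rewrite Hs; solve_kv_eq.
  - apply (quotient_triangle_hexagon_distinct m j).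
    + rewrite <- Hgm; apply proj_G; auto.
    + replace (m + 1, j, kB) with (g (m, j + 1, kA)) by (rewrite Hs; solve_kv_eq).
      apply proj_G; auto.
  - assert (e : proj G (m - 1, j, kA) = proj G (m, j, kA)).
    { replace (m, j, kA) with (g (m - 1, j, kA)) by (rewrite Hs; solve_kv_eq).
      symmetry; apply proj_G; auto. }
    pose proof (quotient_face_NoDup (m, j, fH)) as N. simpl_kv.
    apply NoDup_cons_iff in N as [_ N]. apply NoDup_cons_iff in N as [_ N].
    apply NoDup_cons_iff in N as [N _]. apply N. right; left; auto.
Qed.

Section QuotientOrientation.
Variable O : list (QV G) -> Prop.
Hypothesis HO : orientation (quotient G) O.

Let oriented F := O (map (proj G) (fc F)).

Lemma oriented_same_direction F F' x y t t' :
  cyc_eq (fc F) (x :: y :: t) -> cyc_eq (fc F') (x :: y :: t') ->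
  map (proj G) t <> map (proj G) t' -> (oriented F <-> ~ oriented F').
Proof.
  intros c1 c2 Hne. apply (cyc_eq_map (proj G)) in c1, c2. cbn [map] in c1, c2.
  exact (orientation_same_direction (quotient G) O HO _ _ _ _ _ _
           (quotient_face F) (quotient_face F') c1 c2 Hne).
Qed.

Lemma oriented_opposite_direction F F' x y t t' :
  cyc_eq (fc F) (x :: y :: t) -> cyc_eq (fc F') (y :: x :: t') ->
  map (proj G) t <> map (proj G) (rev t') -> (oriented F <-> oriented F').
Proof.
  intros c1 c2 Hne. apply (cyc_eq_map (proj G)) in c1, c2. cbn [map] in c1, c2.
  rewrite map_rev in Hne.
  exact (orientation_opposite_direction (quotient G) O HO _ _ _ _ _ _
           (quotient_face F) (quotient_face F') c1 c2 Hne).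
Qed.

Ltac length_neq := let E := fresh in intro E; apply (f_equal (@length _)) in E;
  rewrite !length_map in E; simpl in E; discriminate.

(* Hexagon and triangle sharing an edge are oriented oppositely, and the two
   triangles sharing an edge alike, so all hexagons are oriented alike; the
   triangles (i, j, fT1) and (i, j, fT2) are distinct in the quotient because G
   has no unit horizontal shift. *)
Lemma hexagon_oriented_iff i j : oriented (i, j, fH) <-> oriented (0, 0, fH).
Proof.
  assert (V1 : forall i j, oriented (i, j, fH) <-> ~ oriented (i, j, fT2)).
  { intros i' j'. eapply (oriented_same_direction _ _ (i', j', kC) (i', j', kB));
      [solve_rotation | solve_rotation | length_neq]. }
  assert (V2 : forall i j, oriented (i, j, fT2) <-> ~ oriented (i, j + 1, fH)).
  { intros i' j'. eapply (oriented_same_direction _ _ (i', j' + 1, kA) (i', j', kC));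
      [solve_rotation | solve_rotation | length_neq]. }
  assert (V3 : forall i j, oriented (i, j, fT2) <-> oriented (i, j, fT1)).
  { intros i' j'. eapply (oriented_opposite_direction _ _ (i', j', kB) (i', j' + 1, kA));
      [solve_rotation | solve_rotation |].
    simpl. intro E. assert (E' : proj G (i', j', kC) = proj G (i' + 1, j', kC)) by congruence.
    destruct (proj_eq_G _ _ E') as [h [Hh Eh]]. exact (G_no_unit_shift h i' j' Hh Eh). }
  assert (V4 : forall i j, oriented (i, j, fT1) <-> ~ oriented (i + 1, j, fH)).
  { intros i' j'. eapply (oriented_same_direction _ _ (i', j', kB) (i' + 1, j', kC));
      [solve_rotation | solve_rotation | length_neq]. }
  assert (Vv : forall i j, oriented (i, j, fH) <-> oriented (i, j + 1, fH)).
  { intros i' j'. pose proof (V1 i' j'). pose proof (V2 i' j').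
    destruct (classic (oriented (i', j', fT2))); tauto. }
  assert (Vh : forall i j, oriented (i, j, fH) <-> oriented (i + 1, j, fH)).
  { intros i' j'. pose proof (V1 i' j'). pose proof (V3 i' j'). pose proof (V4 i' j').
    destruct (classic (oriented (i', j', fT2))); tauto. }
  assert (Hcol : forall j, oriented (0, j, fH) <-> oriented (0, 0, fH)).
  { apply Z.peano_ind; [tauto | |]; intros z Hz; rewrite <- Hz; [apply iff_sym, Vv |].
    rewrite (Vv 0 (Z.pred z)), Z.add_1_r, Z.succ_pred. reflexivity. }
  revert i. apply Z.peano_ind; [apply Hcol | |]; intros z Hz; rewrite <- Hz;
    [apply iff_sym, Vh |].
  rewrite (Vh (Z.pred z) j), Z.add_1_r, Z.succ_pred. reflexivity.
Qed.

End QuotientOrientation.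

(* A reflection of K reverses the orientation of every hexagon. *)
Lemma G_no_reflection g a b p q : G g -> (forall v, g v = sym a b p q v) -> a <> b -> False.
Proof.
  intros Hg Hs Hab. destruct HT as [_ [_ [O HO]]].
  pose proof (hexagon_oriented_iff O HO) as D. simpl in D.
  destruct HO as [_ [O2 [O3 [O4 _]]]].
  assert (Hm : map (proj G) (map g (fc (0, 0, fH))) = map (proj G) (fc (0, 0, fH))).
  { rewrite map_map. apply map_ext. intros; apply proj_G; auto. }
  assert (HR : exists i j, cyc_eq (map g (fc (0, 0, fH))) (rev (fc (i, j, fH)))).
  { rewrite (map_ext g (sym a b p q)) by auto.
    destruct a, b; try congruence; [exists p, q | exists p, (q + 1)]; solve_rotation. }
  destruct HR as [i [j HR]]. apply (cyc_eq_map (proj G)) in HR. rewrite Hm, map_rev in HR.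
  destruct (classic (O (map (proj G) (fc (0, 0, fH))))) as [H | H].
  - apply (O4 _ (proj2 (D i j) H)). exact (O2 _ _ H HR).
  - destruct (O3 _ (quotient_face (i, j, fH))) as [H1 | H1].
    + apply H, (proj1 (D i j)), H1.
    + apply H. exact (O2 _ _ H1 (cyc_eq_sym _ _ HR)).
Qed.

Lemma G_is_translation g : G g -> exists p q, g = Tr p q.
Proof.
  intros Hg. destruct (G_is_sym g Hg) as [a [b [p [q Hs]]]].
  destruct a, b.
  - exfalso; exact (G_no_halfturn g p q Hg Hs).
  - exfalso; eapply G_no_reflection; eauto; discriminate.
  - exfalso; eapply G_no_reflection; eauto; discriminate.
  - exists p, q. apply functional_extensionality. exact Hs.
Qed.

Lemma proj_eq_Tr x y : proj G x = proj G y -> exists p q, G (Tr p q) /\ Tr p q x = y.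
Proof.
  intros E. destruct (proj_eq_G _ _ E) as [h [Hh Ehx]].
  destruct (G_is_translation h Hh) as [p [q ->]]. eauto.
Qed.

Lemma map_proj_Tr p q s : G (Tr p q) -> map (proj G) (map (Tr p q) s) = map (proj G) s.
Proof. intros Hpq. rewrite map_map. apply map_ext. intros v. apply proj_G; auto. Qed.

Lemma G_no_Tr_1_0 : ~ G (Tr 1 0).
Proof. intros H. apply (G_no_unit_shift _ 0 0 H). solve_kv_eq. Qed.

Ltac absurd_identification E :=
  let p := fresh "p" in let q := fresh "q" in let Hpq := fresh "Hpq" in
  let Ei := fresh "Ei" in let Ej := fresh "Ej" in let Ek := fresh "Ek" in
  destruct (proj_eq_Tr _ _ E) as [p [q [Hpq [Ei [Ej Ek]]%Tr_eq_inv]]]; try discriminate;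
  replace p with 1 in Hpq by lia; replace q with 0 in Hpq by lia; destruct (G_no_Tr_1_0 Hpq).

Lemma quotient_A_adjacent_triangles : has_adjacent_triangles (quotient G) (proj G (0, 0, kA)).
Proof.
  exists (map (proj G) (fc (0, -1, fT1))), (map (proj G) (fc (0, -1, fT2))),
    (proj G (0, -1, kB)), (proj G (1, -1, kC)).
  repeat split; try apply quotient_face; try reflexivity.
  - apply edge_of_map. left; solve_consec.
  - apply edge_of_map. right; solve_consec.
  - apply in_map. solve_In.
  - intros Hin. apply in_map_iff in Hin as [w [Ew Hw]]. simpl_kv. destruct_or; subst w;
      absurd_identification Ew.
Qed.

Lemma quotient_C_no_adjacent_triangles :
  ~ has_adjacent_triangles (quotient G) (proj G (0, 0, kC)).
Proof.
  apply (no_adjacent_triangles (quotient G) _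
           (map (proj G) (fc (-1, 0, fT1))) (map (proj G) (fc (0, 0, fT2)))).
  - intros s Hs; apply (proj1 (proj1 HT) s Hs).
  - intros s [t [Ht ->]] Hl Hin. apply in_map_iff in Hin as [w [Ew Hw]].
    destruct (proj_eq_Tr _ _ (eq_sym Ew)) as [p [q [Hpq <-]]].
    destruct (face_K_at t _ Ht Hw) as [F [HF' Hc]].
    assert (HL : length (fc F) = 3%nat)
      by (rewrite length_map in Hl; rewrite <- Hl; symmetry; apply (cyc_eqr_length _ _ Hc)).
    apply (cyc_eqr_map (proj G)) in Hc.
    cbn [Tr faces_at In] in HF'. destruct_or; subst F; try (cbn in HL; discriminate);
      [left | right];
      (eapply cyc_eqr_trans; [exact Hc |]);
      [rewrite <- (map_proj_Tr p q (fc (-1, 0, fT1)) Hpq) |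
       rewrite <- (map_proj_Tr p q (fc (0, 0, fT2)) Hpq)];
      left; apply (cyc_eq_rotate _ _ 0); solve_kv_eq.
  - intros y H1 H2. simpl_kv. destruct_or; subst y; try reflexivity;
      match goal with E : proj G _ = proj G _ |- _ =>
        first [absurd_identification E | absurd_identification (eq_sym E)] end.
Qed.

Definition respects_orbits (s : KV -> KV) : Prop :=
  forall x y, proj G x = proj G y -> proj G (s x) = proj G (s y).

Lemma quotient_same_orbit s s' v :
  (forall x, s (s' x) = x) -> (forall x, s' (s x) = x) -> is_aut K s ->
  respects_orbits s -> respects_orbits s' ->
  same_orbit (quotient G) (proj G v) (proj G (s v)).
Proof.
  intros H1 H2 Hs Rs Rs'.
  assert (Hs' : is_aut K s') by (eapply inv_aut; eauto).
  set (f := fun P => proj G (s (rep P))). set (f' := fun P => proj G (s' (rep P))).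
  assert (Ef : forall v, f (proj G v) = proj G (s v)) by (intros w; apply Rs, proj_rep).
  assert (Ef' : forall v, f' (proj G v) = proj G (s' v)) by (intros w; apply Rs', proj_rep).
  assert (K1 : forall P, f (f' P) = P) by (intros P; rewrite <- (proj_rep P), Ef', Ef, H1; auto).
  assert (K2 : forall P, f' (f P) = P) by (intros P; rewrite <- (proj_rep P), Ef, Ef', H2; auto).
  exists f. split; [| apply Ef]. split; [exists f'; auto |].
  intros l. split.
  - intros [t [Ht E]]. exists (map s' t). split; [apply (proj2 Hs'); exact Ht |].
    transitivity (map f' (map f l)).
    + rewrite map_map, (map_ext _ (fun x => x)), map_id by auto. reflexivity.
    + transitivity (map f' (map (proj G) t)); [f_equal; exact E |].
      rewrite !map_map. apply map_ext. intros; apply Ef'.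
  - intros [t [Ht ->]]. exists (map s t). split; [apply (proj2 Hs); auto |].
    rewrite !map_map. apply map_ext. intros; apply Ef.
Qed.

Lemma Tr_respects_orbits p q : respects_orbits (Tr p q).
Proof.
  intros x y E. destruct (proj_eq_Tr _ _ E) as [a [b [Hab <-]]].
  replace (Tr p q (Tr a b x)) with (Tr a b (Tr p q x))
    by (destruct x as [[i j] k]; solve_kv_eq).
  symmetry; apply proj_G; auto.
Qed.

Definition halfturn : KV -> KV := sym true true 0 0.

(* The half-turn conjugates a translation of G into its inverse, which lies in G. *)
Lemma halfturn_respects_orbits : respects_orbits halfturn.
Proof.
  intros x y E. destruct (proj_eq_Tr _ _ E) as [a [b [Hab <-]]].
  destruct (proj2 (proj2 (proj2 HG)) _ Hab) as [h [Hh Eh]].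
  destruct (G_is_translation h Hh) as [c [d ->]].
  replace (halfturn (Tr a b x)) with (Tr c d (halfturn x)).
  - symmetry; apply proj_G; auto.
  - pose proof (proj1 (Eh (0, 0, kC))) as E0. simpl in E0. inject_kv.
    destruct x as [[i j] []]; unfold halfturn; solve_kv_eq.
Qed.

Lemma Tr_same_orbit p q v : same_orbit (quotient G) (proj G v) (proj G (Tr p q v)).
Proof.
  apply (quotient_same_orbit _ (Tr (- p) (- q))); auto using Tr_aut, Tr_respects_orbits;
    intros [[i j] k]; solve_kv_eq.
Qed.

Lemma halfturn_same_orbit v : same_orbit (quotient G) (proj G v) (proj G (halfturn v)).
Proof.
  apply (quotient_same_orbit _ halfturn);
    [apply sym00_involutive | apply sym00_involutive | apply sym_aut |
     apply halfturn_respects_orbits ..].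
Qed.

End Quotient.

Lemma same_orbit_trans (M : Map) u v w :
  same_orbit M u v -> same_orbit M v w -> same_orbit M u w.
Proof.
  intros [f [Hf <-]] [g [Hg <-]]. exists (fun x => g (f x)). split; auto using comp_aut.
Qed.

Theorem theorem1 :
  forall G : (KV -> KV) -> Prop,
    aut_subgroup G -> acts_freely G -> torus_map (quotient G) ->
    two_vertex_orbits (quotient G).
Proof.
  intros G HG HF HT. exists (proj G (0, 0, kA)), (proj G (0, 0, kC)). split.
  - intros [f [Hf Ef]]. apply (quotient_C_no_adjacent_triangles G HG HF HT).
    rewrite <- Ef. apply has_adjacent_triangles_aut; auto.
    apply quotient_A_adjacent_triangles; auto.
  - intros w. rewrite <- (proj_rep G w). destruct (rep G w) as [[i j] []].
    + left. replace (i, j, kA) with (Tr i j (0, 0, kA)) by solve_kv_eq.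
      apply Tr_same_orbit; auto.
    + left. replace (i, j, kB) with (Tr (i + 1) (j - 1) (halfturn (0, 0, kA)))
        by (unfold halfturn; solve_kv_eq).
      eapply same_orbit_trans; [apply halfturn_same_orbit | apply Tr_same_orbit]; auto.
    + right. replace (i, j, kC) with (Tr i j (0, 0, kC)) by solve_kv_eq.
      apply Tr_same_orbit; auto.
Qed.
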